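(* Let $m\ge1$, $\zeta=\zeta_m$ a primitive $m$th root of unity, $t=1-\zeta$, $W^{(0)}_m=\prod_{j\in[0,m-1]}\mathbb{Z}[\zeta]$, and \[ W^{(1)}_m=\Bigl\{(y_j)_{j\in[0,m-1]}\in W^{(0)}_m\;\Bigm|\;\sum_{j\in[0,i]}(-1)^j\binom{i}{j}y_j\equiv0\pmod{t^i\mathbb{Z}[\zeta]}\ \text{for all }i\in[0,m-1]\Bigr\}. \] Let $C_m$ be cyclic with generator $c$ and $\omega_m\colon\mathbb{Z}[\zeta]C_m\to W^{(0)}_m$, $c\mapsto(\zeta^j)_{j\in[0,m-1]}$, the cyclic Wedderburn embedding. Then: (i) the image of $\omega_m$ is contained in $W^{(1)}_m$; (ii) the elements $\xi_{m,i}:=\bigl((-1)^it^i\binom{j}{i}\bigr)_{j\in[0,m-1]}$, $i\in[0,m-1]$, form a $\mathbb{Z}[\zeta]$-linear basis of $W^{(1)}_m$; (iii) there are $\mathbb{Z}[\zeta]$-bases of $W^{(1)}_m$ and $W^{(0)}_m$ with respect to which the inclusion $W^{(1)}_m\subseteq W^{(0)}_m$ is diagonal with diagonal entries $t^0,t^1,\dots,t^{m-1}$ (its $(i+1)$st elementary divisor is $t^i$); (iv) the $\mathbb{Z}[\zeta]$-linear determinant of the inclusion $W^{(1)}_m\subseteq W^{(0)}_m$ is $t^{m(m-1)/2}$ (up to a unit).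
   Context: $\binom{j}{i}=0$ if $i>j$. $[a,b]=\{x\in\mathbb{Z}:a\le x\le b\}$. *)

From HB Require Import structures.
From mathcomp Require Import all_boot all_order all_algebra all_field.
Set Implicit Arguments. Unset Strict Implicit. Unset Printing Implicit Defensive.
Import Order.TTheory GRing.Theory Num.Theory.
Local Open Scope ring_scope.

(* Everything lives inside algC (algebraic complex numbers); z plays the role
   of the primitive m-th root of unity zeta. *)

Definition inZz (z x : algC) : Prop :=
  exists p : {poly int}, x = (map_poly (fun k : int => k%:~R) p).[z].

Definition inW0 (m : nat) (z : algC) (y : 'rV[algC]_m) : Prop :=
  forall j : 'I_m, inZz z (y 0 j).

(* W^(1)_m : the congruence conditions (binomial 'C(i,j) = 0 for j > i) *)
Definition inW1 (m : nat) (z : algC) (y : 'rV[algC]_m) : Prop :=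
  inW0 z y /\
  forall i : 'I_m, exists w : algC, inZz z w /\
    \sum_(j < m) (-1) ^+ j * ('C(i, j))%:R * y 0 j = (1 - z) ^+ i * w.

(* cyclic Wedderburn embedding, applied to the element \sum_k a_k c^k of
   Z[z]C_m (coefficients a_k in Z[z], k in [0,m-1]):
   c^k |-> (z^(j k))_j, extended Z[z]-linearly. *)
Definition omega (m : nat) (z : algC) (a : 'I_m -> algC) : 'rV[algC]_m :=
  \row_(j < m) \sum_(k < m) a k * z ^+ (j * k).

Definition xi (m : nat) (z : algC) (i : 'I_m) : 'rV[algC]_m :=
  \row_(j < m) ((-1) ^+ i * (1 - z) ^+ i * ('C(j, i))%:R).

Definition is_Zbasis (m : nat) (z : algC) (S : 'rV[algC]_m -> Prop)
    (b : 'I_m -> 'rV[algC]_m) : Prop :=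
  [/\ forall i, S (b i),
      (forall a : 'I_m -> algC, (forall i, inZz z (a i)) ->
          \sum_(i < m) a i *: b i = 0 -> forall i, a i = 0)
    & (forall w, S w -> exists a : 'I_m -> algC,
          (forall i, inZz z (a i)) /\ w = \sum_(i < m) a i *: b i)].

From HB Require Import structures.
From mathcomp Require Import all_boot all_order all_algebra all_field.
From mathcomp Require Import ring.

Set Implicit Arguments.
Unset Strict Implicit.
Unset Printing Implicit Defensive.
Import Order.TTheory GRing.Theory Num.Theory.
Local Open Scope ring_scope.

(* The binomial matrix P = ((-1)^j C(i,j))_(i,j) is an involution: its i-th row
   lists the coefficients of (1 - X)^i, and substituting 1 - X for X maps
   (1 - X)^i to X^i.  A row vector y satisfies the congruences defining W^(1)
   exactly when the i-th entry of y P^T is divisible by t^i; since the rows of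
   P^T form a Z[z]-basis of W^(0), the vectors xi_i = t^i (row i of P^T) form a
   basis of W^(1), and the inclusion is diag(t^i) in these bases.  For (i),
   the defining sum for c^k is (1 - z^k)^i, which t^i divides.  Transition
   matrices between two Z[z]-bases have determinants that are units of Z[z],
   so any matrix of the inclusion has determinant t^(0 + 1 + ... + (m-1)) up
   to a unit. *)

Section BinomialInversion.
Variable R : comNzRingType.

Lemma exp1subX_poly i :
  (1 - 'X) ^+ i = \poly_(j < i.+1) ((-1) ^+ j * ('C(i, j))%:R) :> {poly R}.
Proof.
rewrite addrC exprD1n poly_def; apply: eq_bigr => j _.
by rewrite -scaleN1r exprZn scalerMnl mulr_natr.
Qed.

Lemma coef_exp1subX i j :
  ((1 - 'X) ^+ i : {poly R})`_j = (-1) ^+ j * ('C(i, j))%:R.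
Proof. by rewrite exp1subX_poly coef_poly; case: ltnP => // /bin_small->; rewrite mulr0. Qed.

Lemma size_exp1subX i : (size ((1 - 'X) ^+ i : {poly R}) <= i.+1)%N.
Proof. by rewrite exp1subX_poly size_poly. Qed.

Lemma sum_binom_sign n i (x : R) : (i < n)%N ->
  \sum_(j < n) (-1) ^+ j * ('C(i, j))%:R * x ^+ j = (1 - x) ^+ i.
Proof.
move=> lt_in; have := horner_coef_wide x (leq_trans (size_exp1subX i) lt_in).
by rewrite !hornerE => ->; apply: eq_bigr => j _; rewrite coef_exp1subX.
Qed.

Definition binom_mx n : 'M[R]_n := \matrix_(i, j) ((-1) ^+ j * ('C(i, j))%:R).

Lemma binom_mxK n : binom_mx n *m binom_mx n = 1%:M.
Proof.
apply/matrixP => i k; rewrite !mxE.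
have : ((1 - 'X) ^+ i \Po (1 - 'X))`_k = (k == i)%:R :> R.
  by rewrite rmorphXn rmorphB /= comp_polyX comp_polyC opprB addrC subrK coefXn.
have le_i_n := leq_trans (size_exp1subX i) (ltn_ord i).
rewrite coef_comp_poly (big_ord_widen n (fun j => _`_j * ((1 - 'X) ^+ j)`_k) le_i_n).
rewrite big_mkcond eq_sym => <-; apply: eq_bigr => j _; rewrite !mxE -!coef_exp1subX.
by case: ltnP => // /(nth_default 0)->; rewrite mul0r.
Qed.

Lemma trmx_binom_mxK n : (binom_mx n)^T *m (binom_mx n)^T = 1%:M.
Proof. by rewrite -trmx_mul binom_mxK trmx1. Qed.

End BinomialInversion.

Arguments binom_mx {R} n.

Section ZzSubring.
Variable z : algC.

Lemma inZzD x y : inZz z x -> inZz z y -> inZz z (x + y).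
Proof. by move=> [p ->] [q ->]; exists (p + q); rewrite rmorphD hornerD. Qed.

Lemma inZzM x y : inZz z x -> inZz z y -> inZz z (x * y).
Proof. by move=> [p ->] [q ->]; exists (p * q); rewrite rmorphM hornerM. Qed.

Lemma inZzN x : inZz z x -> inZz z (- x).
Proof. by move=> [p ->]; exists (- p); rewrite rmorphN hornerN. Qed.

Lemma inZzB x y : inZz z x -> inZz z y -> inZz z (x - y).
Proof. by move=> zx /inZzN; apply: inZzD. Qed.

Lemma inZz_nat n : inZz z n%:R.
Proof. by exists n%:R; rewrite rmorph_nat -polyC_natr hornerC. Qed.

Lemma inZz_root : inZz z z.
Proof. by exists 'X; rewrite map_polyX hornerX. Qed.

Lemma inZz_1subr : inZz z (1 - z).
Proof. exact: inZzB (inZz_nat 1) inZz_root. Qed.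

Lemma inZzX x n : inZz z x -> inZz z (x ^+ n).
Proof.
move=> zx; elim: n => [|n IHn]; first by rewrite expr0; apply: (inZz_nat 1).
by rewrite exprS; apply: inZzM.
Qed.

Lemma inZz_sign n : inZz z ((-1) ^+ n).
Proof. exact/inZzX/inZzN/(inZz_nat 1). Qed.

Lemma inZz_sum I (r : seq I) (P : pred I) (F : I -> algC) :
  (forall i, P i -> inZz z (F i)) -> inZz z (\sum_(i <- r | P i) F i).
Proof. by move=> zF; apply: big_ind => //; [apply: (inZz_nat 0) | apply: inZzD]. Qed.

Lemma inZz_prod I (r : seq I) (P : pred I) (F : I -> algC) :
  (forall i, P i -> inZz z (F i)) -> inZz z (\prod_(i <- r | P i) F i).
Proof. by move=> zF; apply: big_ind => //; [apply: (inZz_nat 1) | apply: inZzM]. Qed.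

Definition Zmx {p q} (A : 'M[algC]_(p, q)) : Prop := forall i j, inZz z (A i j).

Lemma ZmxM p q r (A : 'M_(p, q)) (B : 'M_(q, r)) : Zmx A -> Zmx B -> Zmx (A *m B).
Proof. by move=> zA zB i j; rewrite mxE; apply: inZz_sum => k _; apply: inZzM. Qed.

Lemma ZmxB1 n (A : 'M_n) : Zmx A -> Zmx (A - 1%:M).
Proof. by move=> zA i j; rewrite !mxE; apply: inZzB => //; apply: inZz_nat. Qed.

Lemma inZz_det n (A : 'M_n) : Zmx A -> inZz z (\det A).
Proof.
move=> zA; apply: inZz_sum => s _.
by apply: inZzM; [apply: inZz_sign | apply: inZz_prod].
Qed.

Lemma Zmx_binom n : Zmx (binom_mx n)^T.
Proof. by move=> i j; rewrite !mxE; apply: inZzM; [apply: inZz_sign | apply: inZz_nat]. Qed.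

End ZzSubring.

Section IntegralBases.
Variables (z : algC) (m : nat) (S : 'rV[algC]_m -> Prop).

Lemma lincomb_mx n (a : 'I_n -> algC) (b : 'I_n -> 'rV[algC]_m) :
  \sum_i a i *: b i = \row_i a i *m \matrix_i b i.
Proof. by rewrite mulmx_sum_row; apply: eq_bigr => i _; rewrite rowK mxE. Qed.

Lemma Zbasis_free b p (K : 'M_(p, m)) : is_Zbasis z S b ->
  Zmx z K -> K *m \matrix_i b i = 0 -> K = 0.
Proof.
move=> [_ free _] zK KB0; apply/matrixP => i k; rewrite mxE.
apply: (free (K i)) => [j|]; first exact: zK.
rewrite lincomb_mx; have -> : \row_j K i j = row i K by apply/rowP => j; rewrite !mxE.
by rewrite -row_mul KB0 row0.
Qed.

Lemma Zbasis_coord b p (v : 'I_p -> 'rV_m) : is_Zbasis z S b ->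
  (forall i, S (v i)) -> exists2 K, Zmx z K & \matrix_i v i = K *m \matrix_i b i.
Proof.
move=> [_ _ span] Sv.
have /fin_all_exists[K coordK] i : exists a, (forall k, inZz z (a k)) /\
    v i = \sum_k a k *: b k by exact: span.
exists (\matrix_(i, k) K i k) => [i k|]; first by rewrite mxE; case: (coordK i).
apply/row_matrixP => i; rewrite rowK row_mul; case: (coordK i) => _ ->.
by rewrite lincomb_mx; congr (_ *m _); apply/rowP => k; rewrite !mxE.
Qed.

Lemma Zbasis_transition b b' : is_Zbasis z S b -> is_Zbasis z S b' ->
  exists K : 'M_m, [/\ Zmx z K, \matrix_i b' i = K *m \matrix_i b i
                    & exists2 u, inZz z u & \det K * u = 1].
Proof.
move=> Bb Bb'; have [Sb _ _] := Bb; have [Sb' _ _] := Bb'.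
have [K zK eK] := Zbasis_coord Bb Sb'; have [K' zK' eK'] := Zbasis_coord Bb' Sb.
have K'K : K' *m K = 1%:M.
  apply/eqP; rewrite -subr_eq0; apply/eqP/(Zbasis_free Bb); first exact/ZmxB1/ZmxM.
  by rewrite mulmxBl -mulmxA -eK -eK' mul1mx subrr.
exists K; split=> //; exists (\det K'); first exact: inZz_det.
by rewrite mulrC -det_mulmx K'K det1.
Qed.

End IntegralBases.

Lemma sum_ord_nat n : (\sum_(i < n) i)%N = (n * (n - 1) %/ 2)%N.
Proof. by rewrite -(big_mkord xpredT (fun i => i)) bin2_sum bin2 divn2 subn1. Qed.

Section CyclicWedderburn.
Variables (m : nat) (z : algC).
Local Notation t := (1 - z).
Local Notation B := ((binom_mx m)^T : 'M[algC]_m).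

Lemma binom_sum_mxE (y : 'rV[algC]_m) (i : 'I_m) :
  \sum_(j < m) (-1) ^+ j * ('C(i, j))%:R * y 0 j = (y *m B) 0 i.
Proof. by rewrite mxE; apply: eq_bigr => j _; rewrite !mxE mulrC. Qed.

Lemma omega_W1 (a : 'I_m -> algC) : (forall k, inZz z (a k)) -> inW1 z (omega z a).
Proof.
move=> za; split=> [j|i].
  rewrite mxE; apply: inZz_sum => k _; apply: inZzM => //.
  exact/inZzX/inZz_root.
pose g (k : nat) := \sum_(l < k) z ^+ l.
have tg k : 1 - z ^+ k = t * g k by rewrite -opprB subrX1 -mulNr opprB.
exists (\sum_k a k * g k ^+ i); split.
  apply: inZz_sum => k _; apply/inZzM/inZzX => //.
  by apply: inZz_sum => l _; apply/inZzX/inZz_root.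
transitivity (\sum_k a k * (1 - z ^+ k) ^+ i).
  under eq_bigr do rewrite mxE big_distrr.
  rewrite exchange_big; apply: eq_bigr => k _ /=.
  rewrite -(sum_binom_sign _ (ltn_ord i)) big_distrr; apply: eq_bigr => j _.
  by rewrite mulnC exprM mulrCA.
by rewrite big_distrr; apply: eq_bigr => k _; rewrite tg exprMn mulrCA.
Qed.

Lemma mulmx_binomK p (X : 'M_(p, m)) : X *m B *m B = X.
Proof. by rewrite -mulmxA trmx_binom_mxK mulmx1. Qed.

Lemma matrix_binom_rows : \matrix_i row i B = B.
Proof. by apply/row_matrixP => i; rewrite rowK. Qed.

Lemma binom_W0_Zbasis : is_Zbasis z (@inW0 m z) (fun i => row i B).
Proof.
split=> [i j|a _|y zy].
- by rewrite mxE; apply: Zmx_binom.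
- rewrite lincomb_mx matrix_binom_rows => aB0 i.
  by have /rowP/(_ i) := mulmx_binomK (\row_i a i); rewrite aB0 !mul0mx !mxE.
exists (fun i => (y *m B) 0 i); split=> [i|].
  have zy' : Zmx z y by move=> i' j; rewrite [i']ord1.
  exact: (ZmxM zy' (@Zmx_binom z m)).
rewrite lincomb_mx matrix_binom_rows -[LHS]mulmx_binomK; congr (_ *m _).
by apply/rowP => i; rewrite [RHS]mxE.
Qed.

Lemma xiE (i : 'I_m) : xi z i = t ^+ i *: row i B.
Proof. by apply/rowP => j; rewrite !mxE mulrCA mulrA. Qed.

Lemma matrix_xi : \matrix_i xi z i = diag_mx (\row_i t ^+ i) *m B.
Proof. by apply/matrixP => i j; rewrite mul_diag_mx !mxE mulrA [t ^+ i * _]mulrC. Qed.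

Lemma xi_W1 (i : 'I_m) : inW1 z (xi z i).
Proof.
split=> [j|i'].
  rewrite xiE mxE; apply: inZzM; first exact/inZzX/inZz_1subr.
  by rewrite mxE; apply: Zmx_binom.
exists (i == i')%:R; split; first exact: inZz_nat.
rewrite binom_sum_mxE xiE -scalemxAl -row_mul trmx_binom_mxK !mxE.
by case: eqP => [->|_]; rewrite ?mulr0 ?mulr1.
Qed.

Lemma exp1subr_neq0 (i : 'I_m) : m.-primitive_root z -> t ^+ i != 0.
Proof.
move=> prim_z; case: i => [[|i] lt_im] /=; first by rewrite oner_neq0.
rewrite expf_neq0 // subr_eq0; apply: contraTneq lt_im => z1.
by have := prim_order_dvd prim_z 1; rewrite -z1 expr1n eqxx dvdn1 => /eqP->.
Qed.

Lemma xi_W1_Zbasis : m.-primitive_root z -> is_Zbasis z (@inW1 m z) (@xi m z).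
Proof.
move=> prim_z; split=> [|a _|y [_ W1y]]; first exact: xi_W1.
  rewrite lincomb_mx matrix_xi mulmxA => aDB0 i.
  have /rowP/(_ i) := mulmx_binomK (\row_i a i *m diag_mx (\row_i t ^+ i)).
  rewrite aDB0 !mul0mx mul_mx_diag !mxE => /esym/eqP.
  by rewrite mulf_eq0 (negPf (exp1subr_neq0 i prim_z)) orbF => /eqP.
have /fin_all_exists[w coord_w] := W1y.
exists w; split=> [i|]; first by case: (coord_w i).
rewrite lincomb_mx matrix_xi mulmxA -[LHS]mulmx_binomK; congr (_ *m _).
apply/rowP => i; rewrite mul_mx_diag !mxE mulrC; case: (coord_w i) => _ <-.
by rewrite binom_sum_mxE mxE.
Qed.

Lemma det_W1_in_W0 (b1 b0 : 'I_m -> 'rV[algC]_m) (M : 'M[algC]_m) :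
  m.-primitive_root z ->
  is_Zbasis z (@inW1 m z) b1 -> is_Zbasis z (@inW0 m z) b0 ->
  (forall i, b1 i = \sum_k M i k *: b0 k) ->
  exists u, [/\ u != 0, inZz z u, inZz z u^-1 &
    \det M = t ^+ (m * (m - 1) %/ 2) * u].
Proof.
move=> prim_z Bb1 Bb0 b1E.
have eM : \matrix_i b1 i = M *m \matrix_i b0 i.
  apply/row_matrixP => i; rewrite rowK row_mul b1E lincomb_mx.
  by congr (_ *m _); apply/rowP => k; rewrite !mxE.
have [A [zA eA [a za detA]]] := Zbasis_transition Bb1 (xi_W1_Zbasis prim_z).
have [C [zC eC [c zc detC]]] := Zbasis_transition binom_W0_Zbasis Bb0.
have eD : diag_mx (\row_i t ^+ i) = A *m M *m C.
  by rewrite -[LHS]mulmx_binomK -matrix_xi eA eM eC matrix_binom_rows !mulmxA mulmx_binomK.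
have detD : \det (diag_mx (\row_(i < m) t ^+ i)) = t ^+ (m * (m - 1) %/ 2).
  by rewrite det_diag -sum_ord_nat -prodrXr; apply: eq_bigr => i _; rewrite mxE.
have acK : a * c * (\det A * \det C) = 1.
  by rewrite mulrACA [a * _]mulrC [c * _]mulrC detA detC mulr1.
exists (a * c); split.
- by rewrite -unitfE; apply/unitrPr; exists (\det A * \det C).
- exact: inZzM.
- by rewrite (mulr1_eq acK); apply: inZzM; apply: inZz_det.
- by rewrite -detD eD !det_mulmx -[LHS]mulr1 -acK; ring.
Qed.

End CyclicWedderburn.

Theorem lemma3p18 (m : nat) (z : algC) :
  (0 < m)%N -> m.-primitive_root z ->
  (* (i) *)
  (forall a : 'I_m -> algC, (forall k, inZz z (a k)) -> inW1 z (omega z a)) /\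
  (* (ii) *)
  is_Zbasis z (@inW1 m z) (@xi m z) /\
  (* (iii) *)
  (exists (b1 b0 : 'I_m -> 'rV[algC]_m),
      [/\ is_Zbasis z (@inW1 m z) b1, is_Zbasis z (@inW0 m z) b0
        & forall i : 'I_m, b1 i = (1 - z) ^+ i *: b0 i]) /\
  (* (iv) *)
  (forall (b1 b0 : 'I_m -> 'rV[algC]_m) (M : 'M[algC]_m),
      is_Zbasis z (@inW1 m z) b1 -> is_Zbasis z (@inW0 m z) b0 ->
      (forall i k, inZz z (M i k)) ->
      (forall i, b1 i = \sum_(k < m) M i k *: b0 k) ->
      exists u : algC, [/\ u != 0, inZz z u, inZz z u^-1 &
        \det M = (1 - z) ^+ (m * (m - 1) %/ 2) * u]).
Proof.
move=> _ prim_z; split; first exact: omega_W1.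
split; first exact: xi_W1_Zbasis.
split; last by move=> b1 b0 M Bb1 Bb0 _; apply: det_W1_in_W0.
exists (@xi m z), (fun i => row i (binom_mx m)^T).
by split; [exact: xi_W1_Zbasis | exact: binom_W0_Zbasis | exact: xiE].
Qed.
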